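(* For every number $a$ and every integer $k\geq1$, $$\sum_{r=1}^{k}(-1)^{k-r}\sum_{\substack{k_1+\cdots+k_r=k\\ k_i\geq1}}\ \prod_{i=1}^{r}\frac{a(a-k_i)^{k_i-1}}{k_i!}=\frac{a(a+k)^{k-1}}{k!} \quad\text{and}\quad \sum_{r=1}^{k}(-1)^{k-r}\sum_{\substack{k_1+\cdots+k_r=k\\ k_i\geq1}}\ \prod_{i=1}^{r}\frac{a(a+k_i)^{k_i-1}}{k_i!}=\frac{a(a-k)^{k-1}}{k!},$$ where the inner sums run over all ordered $r$-tuples of positive integers with sum $k$.
   Context: The convention $0^0=1$ is used. *)

From mathcomp Require Import all_boot all_order all_algebra.
Set Implicit Arguments. Unset Strict Implicit. Unset Printing Implicit Defensive.
Import Order.TTheory GRing.Theory Num.Theory.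
Local Open Scope ring_scope.

(* The set of compositions of k into r parts: r-tuples (k_1,...,k_r) of
   positive integers with k_1 + ... + k_r = k, encoded as finite functions
   'I_r -> 'I_k.+1 (each part is at most k). *)
Definition composition (k r : nat) (t : {ffun 'I_r -> 'I_k.+1}) : bool :=
  [forall i, 0 < (t i : nat)]%N && (\sum_(i < r) (t i : nat) == k)%N.

Definition abel_term (R : numFieldType) (a b : R) (m : nat) : R :=
  a * (a + b * m%:R) ^+ (m.-1) / (m`!)%:R.

Definition alt_comp_sum (R : numFieldType) (a b : R) (k : nat) : R :=
  \sum_(1 <= r < k.+1)
    (-1) ^+ (k - r) *
    \sum_(t : {ffun 'I_r -> 'I_k.+1} | composition t)
       \prod_(i < r) abel_term a b (t i).

From mathcomp Require Import all_boot all_order all_algebra.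
From mathcomp Require Import ring zify.
Import Order.TTheory GRing.Theory Num.Theory.
Set Implicit Arguments. Unset Strict Implicit. Unset Printing Implicit Defensive.
Local Open Scope ring_scope.

(* Let A_x(z) = sum_m x (x + b m)^(m-1) z^m / m! be the exponential generating
   function of the Abel polynomials. Abel's identity
     sum_j C(n, j) x (x + b j)^(j-1) (y + b (n-j))^(n-j) = (x + y + b n)^n
   yields A_x A_y = A_(x+y), hence A_a A_(-a) = A_0 = 1. The sum over the
   compositions of k into r parts is the coefficient of z^k in (A_a - 1)^r, so the
   alternating sum is (-1)^k times the z^k coefficient of sum_r (1 - A_a)^r = 1 / A_a
   = A_(-a), that is (-1)^k (-a) (-a + b k)^(k-1) / k! = a (a - b k)^(k-1) / k!;
   the theorem is the case b = -1, 1. Abel's identity is proved by induction on n: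
   as polynomials in y both sides have the same derivative, and both vanish at
   y = -x - b n, the left side because an n-th finite difference of a polynomial of
   degree < n vanishes. *)

Section FiniteDifferences.
Variable R : comNzRingType.

Lemma sum_alt_binomS n (f : nat -> R) :
  \sum_(j < n.+2) (-1) ^+ j * 'C(n.+1, j)%:R * f j =
  \sum_(j < n.+1) (-1) ^+ j * 'C(n, j)%:R * (f j - f j.+1).
Proof.
under [RHS]eq_bigr do rewrite mulrBr.
rewrite sumrB big_ord_recl /= bin0.
under eq_bigr => i _ do rewrite /bump /= binS natrD mulrDr mulrDl.
rewrite big_split /= [in X in _ = X - _]big_ord_recl /= bin0 -addrA; congr (_ + _).
rewrite big_ord_recr /= bin_small // mulr0 mul0r addr0 -sumrN; congr (_ + _).
by apply: eq_bigr => i _; rewrite add1n exprS; ring.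
Qed.

Lemma sum_alt_binom_exp_eq0 (b : R) n m x : (m < n)%N ->
  \sum_(j < n.+1) (-1) ^+ j * 'C(n, j)%:R * (x + b * j%:R) ^+ m = 0.
Proof.
elim: n m x => [//|n IHn] m x ltmn.
rewrite (sum_alt_binomS n (fun j => (x + b * j%:R) ^+ m)).
have expand_shift j : (x + b * j%:R) ^+ m - (x + b * j.+1%:R) ^+ m =
    - \sum_(i < m) 'C(m, i)%:R * b ^+ (m - i) * (x + b * j%:R) ^+ i.
  rewrite (_ : x + b * j.+1%:R = b + (x + b * j%:R)); last first.
    by rewrite -[j.+1]addn1 natrD; ring.
  rewrite [(b + _) ^+ m]exprDn big_ord_recr /= subnn expr0 binn mul1r mulr1n.
  rewrite opprD addrA addrAC subrr add0r.
  by congr (- _); apply: eq_bigr => i _; rewrite mulr_natl; ring.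
under eq_bigr => j _ do rewrite expand_shift mulrN mulr_sumr.
rewrite sumrN exchange_big /= big1 ?oppr0 // => i _.
under eq_bigr => j _ do rewrite mulrCA.
by rewrite -mulr_sumr IHn ?mulr0 //; have := ltn_ord i; lia.
Qed.

End FiniteDifferences.

Lemma signr_subn (R : pzRingType) m n : (m <= n)%N ->
  (-1) ^+ (n - m) = (-1) ^+ n * (-1) ^+ m :> R.
Proof.
move=> le_mn; rewrite -{2}(subnK le_mn) exprD -mulrA -exprD addnn -mul2n exprM.
by rewrite sqrrN !expr1n mulr1.
Qed.

Lemma eq_poly_deriv (R : numDomainType) (p q : {poly R}) (c : R) :
  p^`() = q^`() -> p.[c] = q.[c] -> p = q.
Proof.
move=> eq_deriv eq_at_c; apply/eqP; rewrite -subr_eq0; apply/eqP.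
have coefS_eq0 i : (p - q)`_i.+1 = 0.
  have /eqP := congr1 (coefp i) eq_deriv.
  by rewrite /= -subr_eq0 -coefB -derivB coef_deriv mulrn_eq0 => /eqP.
have const_diff : p - q = ((p - q)`_0)%:P.
  by apply/polyP => -[|i]; rewrite coefC ?coefS_eq0.
have : (p - q).[c] = 0 by rewrite hornerD hornerN eq_at_c subrr.
by rewrite {1}const_diff hornerC {2}const_diff => ->; rewrite polyC0.
Qed.

Lemma natr_mul_bin_down (R : pzSemiRingType) n j :
  (n.+1 - j)%:R * 'C(n.+1, j)%:R = n.+1%:R * 'C(n, j)%:R :> R.
Proof. by rewrite -!natrM -mul_bin_down. Qed.

Lemma deriv_XaddC_exp (R : comNzRingType) (c : R) m :
  (('X + c%:P) ^+ m)^`() = m%:R *: ('X + c%:P) ^+ m.-1.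
Proof. by rewrite deriv_exp derivD derivX derivC addr0 mul1r scaler_nat. Qed.

Section AbelIdentity.
Variables (R : numFieldType) (b : R).

Definition abel (x : R) m : R :=
  if m is m'.+1 then x * (x + b * m%:R) ^+ m' else 1.

(* The left side of Abel's identity with y replaced by X + y. *)
Definition abel_sum (x y : R) n : {poly R} :=
  \sum_(j < n.+1) ('C(n, j)%:R * abel x j) *: ('X + (y + b * (n - j)%:R)%:P) ^+ (n - j).

Lemma abel_sum_deriv x y n :
  (abel_sum x y n.+1)^`() = n.+1%:R *: abel_sum x (y + b) n.
Proof.
rewrite raddf_sum big_ord_recr /= subnn derivZ deriv_XaddC_exp scale0r scaler0.
rewrite addr0 scaler_sumr; apply: eq_bigr => j _.
have le_jn : (j <= n)%N by rewrite -ltnS.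
have := natr_mul_bin_down R n j; rewrite derivZ deriv_XaddC_exp !subSn //= => e.
rewrite !scalerA mulrA -e; congr (_ *: _); first ring.
by rewrite mulrS; congr ((_ + _%:P) ^+ _); ring.
Qed.

Lemma horner_abel_sum x y n : (abel_sum x y n.+1).[- (x + y + b * n.+1%:R)] = 0.
Proof.
rewrite -[RHS](mulr0 ((-1) ^+ n.+1 * x)) -(sum_alt_binom_exp_eq0 b x (ltnSn n)).
rewrite horner_sum mulr_sumr; apply: eq_bigr => -[j] /=.
rewrite ltnS => le_jn _; rewrite hornerZ horner_exp hornerD hornerX hornerC.
have -> : - (x + y + b * n.+1%:R) + (y + b * (n.+1 - j)%:R) = -1 * (x + b * j%:R).
  by rewrite natrB //; ring.
rewrite exprMn (signr_subn R le_jn).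
case: j le_jn => [|j] le_jn /=; first by rewrite bin0 subn0 mulr0 addr0 [x ^+ n.+1]exprS; ring.
have -> : (x + b * j.+1%:R) ^+ n = (x + b * j.+1%:R) ^+ j * (x + b * j.+1%:R) ^+ (n.+1 - j.+1).
  by rewrite -exprD subSS subnKC.
ring.
Qed.

Lemma abel_sumE x y n : abel_sum x y n = ('X + (x + y + b * n%:R)%:P) ^+ n.
Proof.
elim: n y => [|n IHn] y; first by rewrite /abel_sum big_ord1 mul1r scale1r !expr0.
apply: (@eq_poly_deriv _ _ _ (- (x + y + b * n.+1%:R))).
  rewrite abel_sum_deriv IHn deriv_XaddC_exp /= mulrS.
  by congr (_ *: (_ + _%:P) ^+ _); ring.
by rewrite horner_abel_sum horner_exp hornerD hornerX hornerC addNr expr0n.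
Qed.

Lemma abel_binomial x y n :
  \sum_(j < n.+1) 'C(n, j)%:R * abel x j * (y + b * (n - j)%:R) ^+ (n - j)
  = (x + y + b * n%:R) ^+ n.
Proof.
have := congr1 (horner^~ 0) (abel_sumE x y n).
rewrite /= horner_sum horner_exp hornerD hornerX hornerC add0r => <-.
by apply: eq_bigr => j _; rewrite hornerZ horner_exp hornerD hornerX hornerC add0r.
Qed.

Lemma abelE x m : abel x m = (x + b * m%:R) ^+ m - b * m%:R * (x + b * m%:R) ^+ m.-1.
Proof. by case: m => [|m] /=; rewrite ?mulr0 ?mul0r ?subr0 // exprS; ring. Qed.

Lemma abel0 m : abel 0 m = (m == 0)%:R.
Proof. by case: m => [|m] //=; rewrite mul0r. Qed.

Lemma abelDn x y n :
  \sum_(j < n.+1) 'C(n, j)%:R * abel x j * abel y (n - j) = abel (x + y) n.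
Proof.
case: n => [|n]; first by rewrite big_ord1 /= bin0 !mul1r.
under eq_bigr => j _ do rewrite (abelE y) mulrBr.
rewrite sumrB abel_binomial big_ord_recr /= subnn mulr0 mul0r mulr0 addr0.
have -> : \sum_(j < n.+1) 'C(n.+1, j)%:R * abel x j *
      (b * (n.+1 - j)%:R * (y + b * (n.+1 - j)%:R) ^+ (n.+1 - j).-1)
    = b * n.+1%:R * \sum_(j < n.+1) 'C(n, j)%:R * abel x j *
      (y + b + b * (n - j)%:R) ^+ (n - j).
  rewrite mulr_sumr; apply: eq_bigr => j _.
  have le_jn : (j <= n)%N by rewrite -ltnS.
  have := natr_mul_bin_down R n j; rewrite !subSn //= => e.
  transitivity (b * ((n - j).+1%:R * 'C(n.+1, j)%:R) * abel x j *
    (y + b * (n - j).+1%:R) ^+ (n - j)); first ring.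
  have -> : y + b * (n - j).+1%:R = y + b + b * (n - j)%:R by rewrite mulrS; ring.
  by rewrite e; ring.
rewrite abel_binomial /= exprS mulrS.
have -> : x + (y + b) + b * n%:R = x + y + b * (1 + n%:R) by ring.
ring.
Qed.

Lemma abel_egf_convolution x y n :
  \sum_(j < n.+1) abel x j / (j`!)%:R * (abel y (n - j) / ((n - j)`!)%:R)
  = abel (x + y) n / (n`!)%:R.
Proof.
have fact_neq0 m : (m`!)%:R != 0 :> R by rewrite pnatr_eq0 -lt0n fact_gt0.
rewrite -abelDn mulr_suml; apply: eq_bigr => j _.
have le_jn : (j <= n)%N by rewrite -ltnS.
rewrite -(bin_fact le_jn) !natrM.
by field; rewrite !fact_neq0 pnatr_eq0 -lt0n bin_gt0.
Qed.

End AbelIdentity.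

Section TruncatedPowerSeries.
Variable R : comNzRingType.
Implicit Types p q U V : {poly R}.

Lemma coefM_low_eq0 p q k : (forall i, (i <= k)%N -> p`_i = 0) -> (p * q)`_k = 0.
Proof. by move=> p_low; rewrite coefM big1 // => i _; rewrite p_low ?mul0r // -ltnS. Qed.

Lemma coefX_low_eq0 p n i : p`_0 = 0 -> (i < n)%N -> (p ^+ n)`_i = 0.
Proof.
move=> p0; elim: n i => [|n IHn] i lt_in //.
rewrite exprS coefM big1 // => -[[|j] lt_ji] _ /=; first by rewrite p0 mul0r.
by rewrite IHn ?mulr0 //; lia.
Qed.

Lemma coef_geometric_inverse U V k :
  U`_0 = 1 -> (forall i, (i <= k)%N -> (U * V - 1)`_i = 0) ->
  (\sum_(r < k.+1) (1 - U) ^+ r)`_k = V`_k.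
Proof.
move=> U0 UV_low; set S := \sum_(r < k.+1) _.
have US : U * S = 1 - (1 - U) ^+ k.+1.
  by rewrite -[RHS]opprB subrX1 -/S; ring.
have -> : S = (1 - (1 - U) ^+ k.+1) * V - S * (U * V - 1) by rewrite -US; ring.
have low_pow i : (i <= k)%N -> ((1 - U) ^+ k.+1)`_i = 0.
  by move=> le_ik; apply: coefX_low_eq0; rewrite ?coefB ?coef1 ?U0 ?subrr.
rewrite coefB mulrBl coefB mul1r [S * _]mulrC (coefM_low_eq0 _ UV_low).
by rewrite (coefM_low_eq0 _ low_pow) !subr0.
Qed.

Lemma prod_scaleXn (I : Type) (s : seq I) (f : I -> R) (g : I -> nat) :
  \prod_(i <- s) (f i *: 'X^(g i)) = (\prod_(i <- s) f i) *: 'X^(\sum_(i <- s) g i).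
Proof.
elim: s => [|i s IHs]; first by rewrite !big_nil scale1r expr0.
by rewrite !big_cons IHs exprD -scalerAl -scalerAr scalerA.
Qed.

Lemma sum_composition_coef (c : nat -> R) k r :
  \sum_(t : {ffun 'I_r -> 'I_k.+1} | composition t) \prod_(i < r) c (t i)
  = ((\poly_(m < k.+1) (if m == 0%N then 0 else c m)) ^+ r)`_k.
Proof.
rewrite (_ : _ ^+ r = \prod_(i < r) \sum_(m < k.+1)
    ((if (m : nat) == 0%N then 0 else c m) *: 'X^m)); last first.
  by rewrite prodr_const card_ord poly_def.
rewrite bigA_distr_bigA coef_sum big_mkcond /=.
apply: eq_bigr => t _; rewrite prod_scaleXn coefZ coefXn /composition eq_sym.
have [t_pos | /forallPn[i]] /= := boolP [forall i, 0 < t i]%N; last first.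
  by rewrite lt0n negbK (bigD1 i) //= => /eqP->; rewrite eqxx !mul0r.
case: eqP => _; rewrite ?mulr0 ?mulr1 //.
by apply: eq_bigr => i _; have := forallP t_pos i; rewrite lt0n => /negPf->.
Qed.

End TruncatedPowerSeries.

Section AlternatingCompositionSum.
Variables (R : numFieldType) (a b : R).

Definition abel_egf (x : R) k : {poly R} := \poly_(m < k.+1) (abel b x m / (m`!)%:R).

Lemma coef_abel_egfM x y k i : (i <= k)%N ->
  (abel_egf x k * abel_egf y k)`_i = abel b (x + y) i / (i`!)%:R.
Proof.
move=> le_ik; rewrite coefM -abel_egf_convolution; apply: eq_bigr => -[j /= lt_ji] _.
by rewrite !coef_poly !ltnS (leq_trans (leq_subr j i) le_ik) (leq_trans _ le_ik).
Qed.

Lemma alt_comp_sum_geometric k : (0 < k)%N ->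
  alt_comp_sum a b k = (-1) ^+ k * (\sum_(r < k.+1) (1 - abel_egf a k) ^+ r)`_k.
Proof.
move=> k_gt0.
have abel_termsE : \poly_(m < k.+1) (if m == 0%N then 0 else abel_term a b m)
    = abel_egf a k - 1.
  apply/polyP => -[|m]; rewrite coefB coef1 !coef_poly //=.
    by rewrite fact0 mulr1n divr1 subrr.
  by rewrite subr0.
rewrite /alt_comp_sum big_add1 /= big_mkord big_ord_recl /= expr0 coefD coef1.
rewrite (negPf (lt0n_neq0 k_gt0)) add0r coef_sum mulr_sumr; apply: eq_bigr => r _.
rewrite sum_composition_coef abel_termsE -[1 - abel_egf a k]opprB.
rewrite -[- (abel_egf a k - 1)]scaleN1r /bump /=.
by rewrite exprZn coefZ (signr_subn R (ltn_ord r)); ring.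
Qed.

Lemma alt_comp_sumE k : (0 < k)%N ->
  alt_comp_sum a b k = a * (a - b * k%:R) ^+ k.-1 / (k`!)%:R.
Proof.
move=> k_gt0; rewrite alt_comp_sum_geometric //.
rewrite (@coef_geometric_inverse _ _ (abel_egf (- a) k)); first last.
- move=> i le_ik; rewrite coefB coef_abel_egfM // subrr abel0 coef1.
  by case: i {le_ik} => [|i] /=; rewrite ?mulr1n ?divr1 ?mul0r subrr.
- by rewrite coef_poly /= mulr1n divr1.
rewrite coef_poly ltnSn; case: k k_gt0 => // k _ /=.
have sign_sqr : (-1) ^+ k * (-1) ^+ k = 1 :> R.
  by have := signr_subn R (leqnn k); rewrite subnn expr0.
have -> : - a + b * k.+1%:R = - (a - b * k.+1%:R) by ring.
rewrite [(- (a - _)) ^+ k]exprNn exprS.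
transitivity ((-1) ^+ k * (-1) ^+ k * (a * (a - b * k.+1%:R) ^+ k / (k.+1)`!%:R)).
  ring.
by rewrite sign_sqr mul1r.
Qed.

End AlternatingCompositionSum.

Theorem mainTheorem10 (R : numFieldType) (a : R) (k : nat) (hk : (1 <= k)%N) :
  alt_comp_sum a (-1) k = a * (a + k%:R) ^+ k.-1 / (k`!)%:R /\
  alt_comp_sum a 1 k = a * (a - k%:R) ^+ k.-1 / (k`!)%:R.
Proof. by rewrite !alt_comp_sumE // mulN1r opprK mul1r. Qed.
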